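(* For real $\alpha\ge0$ and $\sigma^2>0$ let $\psi_1(\alpha,\sigma^2)=\int_0^{\pi/2}\frac{\alpha\sin^2\theta}{(\alpha^2\sin^2\theta+\sigma^2)^{1/2}}d\theta$. Then: (i) for each fixed $\sigma^2>0$, $\alpha\mapsto\psi_1(\alpha,\sigma^2)$ is concave and strictly increasing on $\alpha>0$; (ii) $0<\psi_1(\alpha,\sigma^2)\le1$ for all $\alpha>0,\sigma^2>0$; (iii) if $0<\sigma^2<\pi^2/16$, the equation $\alpha=\psi_1(\alpha,\sigma^2)$ has exactly two nonnegative solutions, $\alpha=0$ and $\alpha=F_1(\sigma^2)>0$, and $\alpha<\psi_1(\alpha,\sigma^2)<F_1(\sigma^2)$ for $\alpha\in(0,F_1(\sigma^2))$, while $F_1(\sigma^2)<\psi_1(\alpha,\sigma^2)<\alpha$ for $\alpha>F_1(\sigma^2)$. If $\sigma^2\ge\pi^2/16$, then $\alpha=0$ is the unique nonnegative solution, and $0<\psi_1(\alpha,\sigma^2)<\alpha$ for all $\alpha>0$. *)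

From Stdlib Require Import Reals ClassicalEpsilon.
Open Scope R_scope.

(* Integrand  θ ↦ α sin²θ / sqrt(α² sin²θ + σ²) ; s stands for σ². *)
Definition psi1_integrand (a s : R) (t : R) : R :=
  a * (sin t)^2 / sqrt (a^2 * (sin t)^2 + s).

(* For s > 0 the
   integrand is continuous, hence Riemann integrable, and the chosen value is
   its Riemann integral (RiemannInt does not depend on the integrability proof). *)
Definition psi1 (a s : R) : R :=
  epsilon (inhabits 0)
    (fun I => exists pr : Riemann_integrable (psi1_integrand a s) 0 (PI / 2),
                RiemannInt pr = I).

Definition concave_on_pos (f : R -> R) : Prop :=
  forall x y t, 0 < x -> 0 < y -> 0 <= t <= 1 ->
    t * f x + (1 - t) * f y <= f (t * x + (1 - t) * y).

Definition strictly_increasing_on_pos (f : R -> R) : Prop :=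
  forall x y, 0 < x -> x < y -> f x < f y.

(* With u = sin² θ the integrand is k_u(a) = a u / sqrt (a² u + s), whose derivative
   u s / (a² u + s)^(3/2) is positive, nonincreasing in a >= 0 and at most 1/√s.
   Integrating over θ makes ψ₁ concave, strictly increasing and Lipschitz in a.
   Moreover ψ₁(a) = a φ₁(a) with φ₁ strictly decreasing, so the nonzero fixed points
   are the solutions of φ₁(a) = 1.  As φ₁(0) = π / (4√s), there is none when
   s >= π²/16; when s < π²/16, φ₁ > 1 near 0 while ψ₁ <= 1, and the intermediate
   value theorem provides exactly one, F₁(s). *)

From Coquelicot Require Import Coquelicot.
From Stdlib Require Import Reals Lra Psatz ClassicalEpsilon.
Open Scope R_scope.

Lemma ex_RInt_of_continuous (f : R -> R) a b :
  (forall t, continuous f t) -> ex_RInt f a b.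
Proof. intros hf. apply (@ex_RInt_continuous R_CompleteNormedModule). intros; apply hf. Qed.

Lemma ex_RInt_lincomb (f g : R -> R) a b p q : ex_RInt f a b -> ex_RInt g a b ->
  ex_RInt (fun x => p * f x + q * g x) a b.
Proof.
intros hf hg.
exact (ex_RInt_plus (fun x => p * f x) (fun x => q * g x) a b
         (ex_RInt_scal f a b p hf) (ex_RInt_scal g a b q hg)).
Qed.

(* Coquelicot states the following in an abstract normed module; restated over [R]
   so that the resulting equations are visible to [ring], [field] and [lra]. *)

Lemma RInt_ext_R (f g : R -> R) a b :
  (forall x, Rmin a b < x < Rmax a b -> f x = g x) -> RInt f a b = RInt g a b.
Proof. exact (RInt_ext f g a b). Qed.

Lemma RInt_const_R a b c : RInt (fun _ => c) a b = (b - a) * c.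
Proof. exact (RInt_const a b c). Qed.

Lemma RInt_scal_R (f : R -> R) a b k :
  ex_RInt f a b -> RInt (fun x => k * f x) a b = k * RInt f a b.
Proof. exact (RInt_scal f a b k). Qed.

Lemma RInt_lincomb (f g : R -> R) a b p q : ex_RInt f a b -> ex_RInt g a b ->
  RInt (fun x => p * f x + q * g x) a b = p * RInt f a b + q * RInt g a b.
Proof.
intros hf hg.
rewrite <- (RInt_scal_R f a b p hf), <- (RInt_scal_R g a b q hg).
exact (RInt_plus (fun x => p * f x) (fun x => q * g x) a b
         (ex_RInt_scal f a b p hf) (ex_RInt_scal g a b q hg)).
Qed.

Lemma RInt_minus_R (f g : R -> R) a b : ex_RInt f a b -> ex_RInt g a b ->
  RInt (fun x => f x - g x) a b = RInt f a b - RInt g a b.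
Proof. exact (RInt_minus f g a b). Qed.

Lemma RInt_sin2_0_PI2 : RInt (fun t => sin t ^ 2) 0 (PI / 2) = PI / 4.
Proof.
apply is_RInt_unique.
replace (PI / 4) with ((PI / 2 - sin (PI / 2) * cos (PI / 2)) / 2 - (0 - sin 0 * cos 0) / 2)
  by (rewrite sin_PI2, cos_PI2, sin_0, cos_0; field).
apply (is_RInt_derive (fun t => (t - sin t * cos t) / 2)); intros x _.
- auto_derive; [exact I|]. pose proof (sin2_cos2 x) as e. unfold Rsqr in e. nra.
- apply (@ex_derive_continuous R_AbsRing R_NormedModule). auto_derive. exact I.
Qed.

Lemma RInt_sin_0_PI2 : RInt sin 0 (PI / 2) = 1.
Proof.
apply is_RInt_unique.
replace 1 with (- cos (PI / 2) - - cos 0) by (rewrite cos_PI2, cos_0; ring).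
apply (is_RInt_derive (fun t => - cos t)); intros x _.
- auto_derive; [exact I|ring].
- apply (@ex_derive_continuous R_AbsRing R_NormedModule). auto_derive. exact I.
Qed.

Lemma MVT_is_derive (f df : R -> R) a b : (forall x, is_derive f x (df x)) -> a <= b ->
  exists c, a <= c <= b /\ f b - f a = df c * (b - a).
Proof.
intros hd hab.
destruct (MVT_gen f a b df) as [c [hc e]].
- intros; apply hd.
- intros x _. apply continuity_pt_filterlim, (@ex_derive_continuous R_AbsRing R_NormedModule).
  exists (df x). apply hd.
- rewrite Rmin_left, Rmax_right in hc by lra. exists c; auto.
Qed.

Lemma concave_on_pos_of_deriv (f df : R -> R) :
  (forall x, is_derive f x (df x)) -> (forall x y, 0 < x <= y -> df y <= df x) ->
  concave_on_pos f.
Proof.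
intros hd hdecr.
assert (ordered : forall x y t, 0 < x <= y -> 0 <= t <= 1 ->
          t * f x + (1 - t) * f y <= f (t * x + (1 - t) * y)).
{ intros x y t hxy ht. set (z := t * x + (1 - t) * y).
  destruct (MVT_is_derive f df x z) as [c1 [hc1 e1]]; [exact hd | unfold z; nra |].
  destruct (MVT_is_derive f df z y) as [c2 [hc2 e2]]; [exact hd | unfold z; nra |].
  assert (hd21 : df c2 <= df c1) by (apply hdecr; lra).
  replace (z - x) with ((1 - t) * (y - x)) in e1 by (unfold z; ring).
  replace (y - z) with (t * (y - x)) in e2 by (unfold z; ring).
  assert (0 <= t * (1 - t) * (y - x)) by (apply Rmult_le_pos; nra).
  nra. }
intros x y t hx hy ht. destruct (Rle_lt_dec x y).
- apply ordered; lra.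
- replace (t * x + (1 - t) * y) with ((1 - t) * y + (1 - (1 - t)) * x) by ring.
  replace (t * f x + (1 - t) * f y) with ((1 - t) * f y + (1 - (1 - t)) * f x) by ring.
  apply ordered; lra.
Qed.

Lemma continuity_of_lipschitz (f : R -> R) L : 0 < L ->
  (forall x y, x <= y -> Rabs (f y - f x) <= L * (y - x)) -> continuity f.
Proof.
intros hL hlip x eps heps. exists (eps / L). split; [apply Rdiv_lt_0_compat; lra|].
intros y [_ hy]. simpl in *. unfold R_dist in *.
assert (hxy : Rabs (f y - f x) <= L * Rabs (y - x)).
{ destruct (Rle_lt_dec x y).
  - rewrite (Rabs_right (y - x)) by lra. apply hlip; lra.
  - rewrite (Rabs_minus_sym (f y)), (Rabs_minus_sym y x), (Rabs_right (x - y)) by lra. apply hlip; lra. }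
replace eps with (L * (eps / L)) by (field; lra).
eapply Rle_lt_trans; [exact hxy|]. apply Rmult_lt_compat_l; auto.
Qed.

Definition psi1_kernel (u s a : R) : R := a * u / sqrt (a ^ 2 * u + s).

Definition psi1_kernel_deriv (u s a : R) : R :=
  u * s / ((a ^ 2 * u + s) * sqrt (a ^ 2 * u + s)).

Section Kernel.

Variables u s : R.
Hypothesis hu : 0 <= u.
Hypothesis hs : 0 < s.

Let radicand_pos a : 0 < a ^ 2 * u + s.
Proof. pose proof (pow2_ge_0 a). nra. Qed.

Lemma is_derive_psi1_kernel a : is_derive (psi1_kernel u s) a (psi1_kernel_deriv u s a).
Proof.
unfold psi1_kernel, psi1_kernel_deriv.
pose proof (radicand_pos a) as hX.
pose proof (sqrt_lt_R0 _ hX) as hq.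
pose proof (sqrt_sqrt _ (Rlt_le _ _ hX)) as hqq.
auto_derive; replace (a * (a * 1)) with (a ^ 2) by ring.
- repeat split; lra.
- set (q := sqrt (a ^ 2 * u + s)) in *.
  replace (a ^ 2 * u + s) with (q * q) by lra.
  replace s with (q * q - a ^ 2 * u) by lra.
  field. lra.
Qed.

Lemma psi1_kernel_deriv_nonneg a : 0 <= psi1_kernel_deriv u s a.
Proof.
pose proof (radicand_pos a) as hX. pose proof (sqrt_lt_R0 _ hX).
apply Rdiv_le_0_compat; nra.
Qed.

Lemma psi1_kernel_deriv_pos a : 0 < u -> 0 < psi1_kernel_deriv u s a.
Proof.
intros hu'. pose proof (radicand_pos a) as hX. pose proof (sqrt_lt_R0 _ hX).
apply Rdiv_lt_0_compat; nra.
Qed.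

Lemma psi1_kernel_deriv_antitone a b : 0 <= a <= b ->
  psi1_kernel_deriv u s b <= psi1_kernel_deriv u s a.
Proof.
intros hab. unfold psi1_kernel_deriv, Rdiv.
pose proof (radicand_pos a) as hX. pose proof (sqrt_lt_R0 _ hX).
assert (hXY : a ^ 2 * u + s <= b ^ 2 * u + s) by (assert (a ^ 2 <= b ^ 2) by nra; nra).
apply Rmult_le_compat_l; [nra|]. apply Rinv_le_contravar; [nra|].
apply Rmult_le_compat; try lra. now apply sqrt_le_1_alt.
Qed.

Lemma psi1_kernel_deriv_le a : u <= 1 -> psi1_kernel_deriv u s a <= / sqrt s.
Proof.
intros hu1. unfold psi1_kernel_deriv, Rdiv.
pose proof (radicand_pos a) as hX. pose proof (sqrt_lt_R0 _ hs).
assert (hsX : s <= a ^ 2 * u + s) by (pose proof (pow2_ge_0 a); nra).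
assert (hinv : / ((a ^ 2 * u + s) * sqrt (a ^ 2 * u + s)) <= / (s * sqrt s)).
{ apply Rinv_le_contravar; [nra|]. apply Rmult_le_compat; try lra.
  now apply sqrt_le_1_alt. }
replace (/ sqrt s) with (s * / (s * sqrt s)) by (field; lra).
set (i := / ((a ^ 2 * u + s) * sqrt (a ^ 2 * u + s))) in *.
assert (0 <= i) by (left; apply Rinv_0_lt_compat, Rmult_lt_0_compat; auto; now apply sqrt_lt_R0).
assert (0 <= s * i * (1 - u)) by (apply Rmult_le_pos; nra).
nra.
Qed.

Lemma psi1_kernel_concave : concave_on_pos (psi1_kernel u s).
Proof.
apply (concave_on_pos_of_deriv _ (psi1_kernel_deriv u s)).
- exact is_derive_psi1_kernel.
- intros x y hxy. apply psi1_kernel_deriv_antitone; lra.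
Qed.

Lemma psi1_kernel_increment a b : u <= 1 -> a <= b ->
  0 <= psi1_kernel u s b - psi1_kernel u s a <= (b - a) / sqrt s.
Proof.
intros hu1 hab.
destruct (MVT_is_derive _ _ a b is_derive_psi1_kernel hab) as [c [_ ->]].
pose proof (psi1_kernel_deriv_nonneg c). pose proof (psi1_kernel_deriv_le c hu1).
unfold Rdiv. split; nra.
Qed.

Lemma psi1_kernel_strict a b : 0 < u -> a < b -> psi1_kernel u s a < psi1_kernel u s b.
Proof.
intros hu' hab.
destruct (MVT_is_derive _ _ a b is_derive_psi1_kernel (Rlt_le _ _ hab)) as [c [_ e]].
pose proof (psi1_kernel_deriv_pos c hu'). nra.
Qed.

End Kernel.

Definition phi1_integrand (a s t : R) : R := sin t ^ 2 / sqrt (a ^ 2 * sin t ^ 2 + s).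

Definition phi1 (a s : R) : R := RInt (phi1_integrand a s) 0 (PI / 2).

Lemma psi1_integrand_kernel a s t : psi1_integrand a s t = psi1_kernel (sin t ^ 2) s a.
Proof. reflexivity. Qed.

Lemma psi1_integrand_mul a s t : psi1_integrand a s t = a * phi1_integrand a s t.
Proof. unfold psi1_integrand, phi1_integrand, Rdiv. ring. Qed.

Lemma continuous_phi1_integrand a s t : 0 < s -> continuous (phi1_integrand a s) t.
Proof.
intros hs. apply (@ex_derive_continuous R_AbsRing R_NormedModule). unfold phi1_integrand.
assert (0 < a ^ 2 * sin t ^ 2 + s) by (pose proof (pow2_ge_0 a); pose proof (pow2_ge_0 (sin t)); nra).
auto_derive. replace (a * (a * 1) * (sin t * (sin t * 1))) with (a ^ 2 * sin t ^ 2) by ring.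
repeat split; [lra | apply Rgt_not_eq, sqrt_lt_R0; lra].
Qed.

Lemma continuous_psi1_integrand a s t : 0 < s -> continuous (psi1_integrand a s) t.
Proof.
intros hs. apply (continuous_ext (fun t => a * phi1_integrand a s t)).
- intros; symmetry; apply psi1_integrand_mul.
- apply (continuous_mult (fun _ => a)); [apply continuous_const | now apply continuous_phi1_integrand].
Qed.

Lemma psi1_RInt a s : 0 < s -> psi1 a s = RInt (psi1_integrand a s) 0 (PI / 2).
Proof.
intros hs. unfold psi1.
assert (pr : Riemann_integrable (psi1_integrand a s) 0 (PI / 2)).
{ apply ex_RInt_Reals_0, ex_RInt_of_continuous. intros; now apply continuous_psi1_integrand. }
destruct (epsilon_spec (inhabits 0)
           (fun I => exists pr : Riemann_integrable (psi1_integrand a s) 0 (PI / 2),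
                       RiemannInt pr = I)) as [pr' <-].
{ exists (RiemannInt pr), pr. reflexivity. }
symmetry. apply RInt_Reals.
Qed.

Lemma psi1_eq_mul_phi1 a s : 0 < s -> psi1 a s = a * phi1 a s.
Proof.
intros hs. rewrite psi1_RInt by exact hs. unfold phi1.
rewrite <- RInt_scal_R by (apply ex_RInt_of_continuous; intros; now apply continuous_phi1_integrand).
apply RInt_ext_R. intros; apply psi1_integrand_mul.
Qed.

Section Psi1.

Variable s : R.
Hypothesis hs : 0 < s.

Let ex_psi1_integrand a : ex_RInt (psi1_integrand a s) 0 (PI / 2).
Proof. apply ex_RInt_of_continuous. intros; now apply continuous_psi1_integrand. Qed.

Let ex_phi1_integrand a : ex_RInt (phi1_integrand a s) 0 (PI / 2).
Proof. apply ex_RInt_of_continuous. intros; now apply continuous_phi1_integrand. Qed.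

Let PI2_pos : 0 < PI / 2.
Proof. pose proof PI_RGT_0. lra. Qed.

Let sin2_bounds t : 0 <= sin t ^ 2 <= 1.
Proof. pose proof (SIN_bound t). split; [apply pow2_ge_0 | nra]. Qed.

Let sin_pos t : 0 < t < PI / 2 -> 0 < sin t.
Proof. intros. apply sin_gt_0; pose proof PI_RGT_0; lra. Qed.

Let continuous_sin2 t : continuous (fun t => sin t ^ 2) t.
Proof. apply (@ex_derive_continuous R_AbsRing R_NormedModule). auto_derive. exact I. Qed.

Lemma psi1_concave : concave_on_pos (fun a => psi1 a s).
Proof.
intros x y t hx hy ht. rewrite !psi1_RInt by exact hs.
rewrite <- RInt_lincomb by auto.
apply RInt_le; [lra | now apply ex_RInt_lincomb | auto |].
intros z _. rewrite !psi1_integrand_kernel.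
apply psi1_kernel_concave; auto. apply pow2_ge_0.
Qed.

Lemma psi1_strictly_increasing : strictly_increasing_on_pos (fun a => psi1 a s).
Proof.
intros x y _ hxy. rewrite !psi1_RInt by exact hs.
apply RInt_lt; [lra | intros; now apply continuous_psi1_integrand
                    | intros; now apply continuous_psi1_integrand |].
intros z hz. rewrite !psi1_integrand_kernel.
assert (0 < sin z ^ 2) by (apply pow_lt, sin_pos, hz).
apply psi1_kernel_strict; auto; lra.
Qed.

Lemma psi1_increment a b : a <= b ->
  0 <= psi1 b s - psi1 a s <= PI / 2 * ((b - a) / sqrt s).
Proof.
intros hab. rewrite !psi1_RInt by exact hs. rewrite <- RInt_minus_R by auto.
assert (hex : ex_RInt (fun t => psi1_integrand b s t - psi1_integrand a s t) 0 (PI / 2))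
  by (apply (ex_RInt_minus (V := R_NormedModule)); auto).
assert (hkernel : forall t, 0 <= psi1_integrand b s t - psi1_integrand a s t <= (b - a) / sqrt s)
  by (intros t; rewrite !psi1_integrand_kernel; pose proof (sin2_bounds t);
      apply psi1_kernel_increment; auto; lra).
split.
- apply Rle_trans with (RInt (fun _ => 0) 0 (PI / 2)); [rewrite RInt_const_R; lra |].
  apply RInt_le; auto; [lra | apply ex_RInt_const |]. intros; apply hkernel.
- apply Rle_trans with (RInt (fun _ => (b - a) / sqrt s) 0 (PI / 2));
    [| rewrite RInt_const_R; lra].
  apply RInt_le; auto; [lra | apply ex_RInt_const |]. intros; apply hkernel.
Qed.

Lemma continuity_psi1_minus_id : continuity (fun a => psi1 a s - a).
Proof.
pose proof (sqrt_lt_R0 _ hs).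
set (c := PI / 2 / sqrt s). assert (0 < c) by (apply Rdiv_lt_0_compat; auto).
apply (continuity_of_lipschitz _ (c + 1)); [lra|].
intros x y hxy. pose proof (psi1_increment x y hxy) as hinc.
replace (PI / 2 * ((y - x) / sqrt s)) with (c * (y - x)) in hinc by (unfold c; field; lra).
apply Rabs_le. nra.
Qed.

Lemma psi1_le_1 a : 0 <= a -> psi1 a s <= 1.
Proof.
intros ha. rewrite psi1_RInt, <- RInt_sin_0_PI2 by exact hs.
apply RInt_le; [lra | auto | apply ex_RInt_of_continuous; intros; apply continuous_sin |].
intros t ht. pose proof (sin_pos t ht). unfold psi1_integrand.
assert (hX : 0 < a ^ 2 * sin t ^ 2 + s) by (pose proof (pow2_ge_0 (a * sin t)); nra).
assert (hle : a * sin t <= sqrt (a ^ 2 * sin t ^ 2 + s)).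
{ rewrite <- (sqrt_pow2 (a * sin t)) by nra. apply sqrt_le_1_alt. nra. }
pose proof (sqrt_lt_R0 _ hX).
apply Rmult_le_reg_r with (sqrt (a ^ 2 * sin t ^ 2 + s)); auto.
unfold Rdiv. rewrite Rmult_assoc, Rinv_l, Rmult_1_r by lra. nra.
Qed.

Lemma phi1_strictly_decreasing a b : 0 <= a < b -> phi1 b s < phi1 a s.
Proof.
intros hab. unfold phi1.
apply RInt_lt; [lra | intros; now apply continuous_phi1_integrand
                    | intros; now apply continuous_phi1_integrand |].
intros t ht. pose proof (sin_pos t ht). unfold phi1_integrand, Rdiv.
assert (hu : 0 < sin t ^ 2) by (apply pow_lt; auto).
assert (hX : 0 < a ^ 2 * sin t ^ 2 + s) by (pose proof (pow2_ge_0 a); nra).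
apply Rmult_lt_compat_l; auto.
apply Rinv_lt_contravar; [apply Rmult_lt_0_compat; apply sqrt_lt_R0; nra |].
apply sqrt_lt_1_alt. assert (a ^ 2 < b ^ 2) by nra. nra.
Qed.

Lemma phi1_0 : phi1 0 s = PI / 4 / sqrt s.
Proof.
unfold phi1. rewrite (RInt_ext_R _ (fun t => / sqrt s * sin t ^ 2)).
- rewrite RInt_scal_R, RInt_sin2_0_PI2; [unfold Rdiv; ring |].
  apply ex_RInt_of_continuous. intros; apply continuous_sin2.
- intros t _. unfold phi1_integrand. replace (0 ^ 2 * sin t ^ 2 + s) with s by ring.
  unfold Rdiv; ring.
Qed.

Lemma phi1_lower_bound a : PI / 4 / sqrt (a ^ 2 + s) <= phi1 a s.
Proof.
assert (hq : 0 < sqrt (a ^ 2 + s)) by (apply sqrt_lt_R0; pose proof (pow2_ge_0 a); lra).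
assert (hex : ex_RInt (fun t => sin t ^ 2) 0 (PI / 2))
  by (apply ex_RInt_of_continuous; intros; apply continuous_sin2).
apply Rle_trans with (RInt (fun t => / sqrt (a ^ 2 + s) * sin t ^ 2) 0 (PI / 2)).
{ rewrite RInt_scal_R, RInt_sin2_0_PI2 by exact hex. right; unfold Rdiv; ring. }
apply RInt_le; [lra | exact (ex_RInt_scal _ _ _ _ hex) | auto |].
intros t _. unfold phi1_integrand. pose proof (sin2_bounds t).
assert (hX : 0 < a ^ 2 * sin t ^ 2 + s) by (pose proof (pow2_ge_0 a); nra).
assert (/ sqrt (a ^ 2 + s) <= / sqrt (a ^ 2 * sin t ^ 2 + s)).
{ apply Rinv_le_contravar; [now apply sqrt_lt_R0 |].
  apply sqrt_le_1_alt. pose proof (pow2_ge_0 a). nra. }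
unfold Rdiv. nra.
Qed.

Lemma psi1_pos a : 0 < a -> 0 < psi1 a s.
Proof.
intros ha. rewrite psi1_eq_mul_phi1 by exact hs.
apply Rmult_lt_0_compat; auto. eapply Rlt_le_trans; [| apply phi1_lower_bound].
apply Rdiv_lt_0_compat; [pose proof PI_RGT_0; lra |].
apply sqrt_lt_R0. pose proof (pow2_ge_0 a). lra.
Qed.

Lemma psi1_fixed_point_iff a : a = psi1 a s <-> a = 0 \/ phi1 a s = 1.
Proof.
rewrite psi1_eq_mul_phi1 by exact hs. split.
- intros e. destruct (Req_dec a 0) as [| ha]; [now left | right].
  apply Rmult_eq_reg_l with a; lra.
- intros [-> | ->]; ring.
Qed.

End Psi1.

Lemma phi1_eq_1_of_small_variance s : 0 < s < PI ^ 2 / 16 -> exists F, 0 < F /\ phi1 F s = 1.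
Proof.
intros [hs hsmall]. pose proof PI_RGT_0.
set (a0 := sqrt ((PI ^ 2 / 16 - s) / 2)).
assert (ha0 : 0 < a0) by (apply sqrt_lt_R0; lra).
assert (ha02 : a0 ^ 2 = (PI ^ 2 / 16 - s) / 2) by (apply pow2_sqrt; lra).
assert (hq0 : 0 < sqrt (a0 ^ 2 + s)) by (apply sqrt_lt_R0; nra).
assert (hq : sqrt (a0 ^ 2 + s) < PI / 4).
{ rewrite <- (sqrt_pow2 (PI / 4)) by lra. apply sqrt_lt_1_alt. nra. }
assert (hphi : 1 < phi1 a0 s).
{ eapply Rlt_le_trans; [| now apply phi1_lower_bound].
  apply Rmult_lt_reg_r with (sqrt (a0 ^ 2 + s)); auto.
  unfold Rdiv. rewrite Rmult_assoc, Rinv_l, Rmult_1_r by lra. lra. }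
assert (hpsi_a0 : a0 < psi1 a0 s) by (rewrite psi1_eq_mul_phi1 by exact hs; nra).
pose proof (psi1_le_1 s hs a0 (Rlt_le _ _ ha0)).
pose proof (psi1_le_1 s hs 2 ltac:(lra)).
destruct (IVT_gen (fun a => psi1 a s - a) a0 2 0 (continuity_psi1_minus_id s hs))
  as [F [hF eF]].
{ split; [apply Rle_trans with (psi1 2 s - 2); [apply Rmin_r | lra]
         |apply Rle_trans with (psi1 a0 s - a0); [lra | apply Rmax_l]]. }
rewrite Rmin_left in hF by lra.
exists F. split; [lra|].
destruct (proj1 (psi1_fixed_point_iff s hs F) ltac:(lra)) as [|]; [lra | assumption].
Qed.

Lemma phi1_lt_1_of_large_variance s a : PI ^ 2 / 16 <= s -> 0 < a -> phi1 a s < 1.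
Proof.
intros hlarge ha. pose proof PI_RGT_0.
assert (hs : 0 < s) by nra.
assert (hr : PI / 4 <= sqrt s).
{ rewrite <- (sqrt_pow2 (PI / 4)) by lra. apply sqrt_le_1_alt. nra. }
apply Rlt_le_trans with (phi1 0 s); [apply phi1_strictly_decreasing; auto; lra |].
rewrite phi1_0 by exact hs.
apply Rmult_le_reg_r with (sqrt s); [lra |].
unfold Rdiv. rewrite Rmult_assoc, Rinv_l, Rmult_1_r by lra. lra.
Qed.

Lemma psi1_small_variance s : 0 < s < PI ^ 2 / 16 ->
  exists F, 0 < F /\
    (forall a, 0 <= a -> (a = psi1 a s <-> a = 0 \/ a = F)) /\
    (forall a, 0 < a < F -> a < psi1 a s < F) /\
    (forall a, F < a -> F < psi1 a s < a).
Proof.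
intros hsv. destruct (phi1_eq_1_of_small_variance s hsv) as [F [hF hphiF]].
destruct hsv as [hs _].
assert (hpsiF : psi1 F s = F) by (rewrite psi1_eq_mul_phi1, hphiF by exact hs; ring).
assert (phi1_gt_1 : forall a, 0 <= a < F -> 1 < phi1 a s)
  by (intros; rewrite <- hphiF; now apply phi1_strictly_decreasing).
assert (phi1_lt_1 : forall a, F < a -> phi1 a s < 1)
  by (intros; rewrite <- hphiF; apply phi1_strictly_decreasing; auto; lra).
exists F. split; [exact hF | split; [| split]].
- intros a ha. rewrite psi1_fixed_point_iff by exact hs.
  split; intros [-> | h]; auto; right.
  + destruct (Rtotal_order a F) as [hlt | [heq | hgt]]; auto.
    * pose proof (phi1_gt_1 a (conj ha hlt)). lra.
    * pose proof (phi1_lt_1 a hgt). lra.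
  + now subst.
- intros a ha. rewrite <- hpsiF. split.
  + rewrite psi1_eq_mul_phi1 by exact hs. pose proof (phi1_gt_1 a ltac:(lra)). nra.
  + apply psi1_strictly_increasing; tauto.
- intros a ha. rewrite <- hpsiF. split.
  + apply psi1_strictly_increasing; auto.
  + rewrite psi1_eq_mul_phi1 by exact hs. pose proof (phi1_lt_1 a ha). nra.
Qed.

Lemma psi1_large_variance s : PI ^ 2 / 16 <= s ->
  (forall a, 0 <= a -> (a = psi1 a s <-> a = 0)) /\
  (forall a, 0 < a -> 0 < psi1 a s < a).
Proof.
intros hlarge. assert (hs : 0 < s) by (pose proof PI_RGT_0; nra).
split.
- intros a ha. rewrite psi1_fixed_point_iff by exact hs. split; [| now left].
  intros [-> | h]; [reflexivity |].
  destruct (Req_dec a 0) as [-> | ha0]; [reflexivity |].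
  pose proof (phi1_lt_1_of_large_variance s a hlarge ltac:(lra)). lra.
- intros a ha. split; [now apply psi1_pos |].
  rewrite psi1_eq_mul_phi1 by exact hs.
  pose proof (phi1_lt_1_of_large_variance s a hlarge ha). nra.
Qed.

Theorem mainTheorem9 :
  (* (i) *)
  (forall s, 0 < s ->
     concave_on_pos (fun a => psi1 a s) /\
     strictly_increasing_on_pos (fun a => psi1 a s)) /\
  (* (ii) *)
  (forall a s, 0 < a -> 0 < s -> 0 < psi1 a s <= 1) /\
  (* (iii), small variance *)
  (forall s, 0 < s < PI ^ 2 / 16 ->
     exists F, 0 < F /\
       (forall a, 0 <= a -> (a = psi1 a s <-> a = 0 \/ a = F)) /\
       (forall a, 0 < a < F -> a < psi1 a s < F) /\
       (forall a, F < a -> F < psi1 a s < a)) /\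
  (* (iii), large variance *)
  (forall s, PI ^ 2 / 16 <= s ->
     (forall a, 0 <= a -> (a = psi1 a s <-> a = 0)) /\
     (forall a, 0 < a -> 0 < psi1 a s < a)).
Proof.
split; [| split; [| split]].
- intros s hs. split; [apply psi1_concave | apply psi1_strictly_increasing]; exact hs.
- intros a s ha hs. split; [now apply psi1_pos | apply psi1_le_1; lra].
- exact psi1_small_variance.
- exact psi1_large_variance.
Qed.
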